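(* If $G$ is a finite metacyclic group, then Ganea's homomorphism $H_1(G)\otimes Z(G)\rightarrow H_2(G)$ is an epimorphism.
   Context: A group $G$ is metacyclic if it has a normal cyclic subgroup $K$ with $G/K$ cyclic. $Z(G)$ is the center of $G$ and $H_i$ denotes integral homology. For the central subgroup $Z(G)$ there is Ganea's exact sequence $$H_1(G)\otimes Z(G)\to H_2(G)\to H_2(G/Z(G))\to Z(G)\to H_1(G)\to H_1(G/Z(G))\to 0,$$ and Ganea's homomorphism is its first map $H_1(G)\otimes Z(G)\to H_2(G)$. *)

From mathcomp Require Import all_boot all_algebra all_fingroup all_solvable.
From mathcomp Require Import center.
Set Implicit Arguments. Unset Strict Implicit. Unset Printing Implicit Defensive.
Import GRing.Theory.
Local Open Scope ring_scope.

(* Integral group homology of a finite group gT in low degrees, computed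
   from the (unnormalized) bar complex with trivial coefficients Z:
     C_n = free abelian group on gT^n, represented as int-valued finite
     functions on gT^n (gT is finite, so every such function has finite
     support), with the standard boundary
       d[g|h]   = [h] - [gh] + [g]
       d[g|h|k] = [h|k] - [gh|k] + [g|hk] - [g|h].
   H_2(G) = ker d_2 / im d_3. *)

Section Bar.
Variable gT : finGroupType.

Definition chain1 := {ffun gT -> int}.
Definition chain2 := {ffun (gT * gT)%type -> int}.
Definition chain3 := {ffun (gT * gT * gT)%type -> int}.

Definition e1 (x : gT) : chain1 := [ffun y => (y == x)%:R].
Definition e2 (x y : gT) : chain2 := [ffun p => (p == (x, y))%:R].

Definition bd2 (c : chain2) : chain1 :=
  \sum_(p : gT * gT) (e1 p.2 - e1 (p.1 * p.2)%g + e1 p.1) *~ c p.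

Definition bd3 (c : chain3) : chain2 :=
  \sum_(p : gT * gT * gT)
     (e2 p.1.2 p.2 - e2 (p.1.1 * p.1.2)%g p.2
      + e2 p.1.1 (p.1.2 * p.2)%g - e2 p.1.1 p.1.2) *~ c p.

Definition is_2cycle (c : chain2) : Prop := bd2 c = 0.
Definition is_2boundary (c : chain2) : Prop := exists b : chain3, c = bd3 b.

(* Ganea's homomorphism H_1(G) (x) Z(G) -> H_2(G) sends (g G') (x) z to the
   homology class of the commutator cycle [g|z] - [z|g] (the Pontryagin
   product of the 1-cycles [g] and [z], induced by multiplication
   G x Z(G) -> G).  Since H_1(G) (x) Z(G) is generated by the simple tensors
   (g G') (x) z, its image is the subgroup of H_2(G) generated by these
   classes. *)
Definition ganea_cycle (g z : gT) : chain2 := e2 g z - e2 z g.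

Definition ganea_epi : Prop :=
  forall c : chain2, is_2cycle c ->
    exists a : {ffun (gT * gT)%type -> int},
      is_2boundary
        (c - \sum_(p : gT * gT | p.2 \in 'Z([set: gT])%g) ganea_cycle p.1 p.2 *~ a p).

End Bar.

From mathcomp Require Import all_boot all_algebra all_fingroup all_solvable.
From mathcomp Require Import center ring zify.
From Stdlib Require Import Setoid Morphisms.
Set Implicit Arguments. Unset Strict Implicit. Unset Printing Implicit Defensive.
Import GRing.Theory.
Local Open Scope ring_scope.

(* Let N be the subgroup of 2-chains spanned by the boundaries and the Ganea
   cycles [g|z] - [z|g], z central; every 2-cycle has to be shown to lie in N.
   Modulo N, the pairs (u, g) of a 2-chain and a group element, multiplied by
   (u, g)(v, h) = (u + v + [g|h], gh), form a group, the associativity defect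
   being the boundary of [g|h|k].  For any section sigma g = (T g, g), a
   2-cycle c equals sum_p c(p) ([p.1|p.2] + T p.2 - T (p.1 p.2) + T p.1), the
   weighted sum of the defects of sigma(g) sigma(h) = sigma(gh).  Presenting
   G = <a, b> with a^m = 1, b^n = a^t, b a = a^s b and taking
   sigma(a^i b^j) = A^i B^j, collection writes each defect as a nonnegative
   combination of the failures alpha, beta, gamma of the three relations.
   The cycle condition read on the exponent maps g |-> i, g |-> j kills the
   beta-weight and forces m P = (s - 1) U on the alpha- and gamma-weights, so
   (P, U) is a multiple of ((s - 1)/d, m/d) with d = gcd(m, s - 1).  That
   combination is the defect of B A^(m/d) = A^(m/d) B, which is a Ganea cycle
   because s (m/d) = m/d mod m makes a^(m/d) central. *)

Lemma sum_MzD (I : finType) (P : pred I) (V : zmodType) (F : I -> V)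
    (f g : {ffun I -> int}) :
  \sum_(i | P i) F i *~ (f + g) i =
    \sum_(i | P i) F i *~ f i + \sum_(i | P i) F i *~ g i.
Proof. by rewrite -big_split; apply: eq_bigr => i _; rewrite ffunE mulrzDr. Qed.

Lemma sum_MzN (I : finType) (P : pred I) (V : zmodType) (F : I -> V)
    (f : {ffun I -> int}) :
  \sum_(i | P i) F i *~ (- f) i = - \sum_(i | P i) F i *~ f i.
Proof. by rewrite -sumrN; apply: eq_bigr => i _; rewrite ffunE mulrNz. Qed.

Lemma sum_Mz_eq (I : finType) (V : zmodType) (F : I -> V) j :
  \sum_i F i *~ (i == j)%:R = F j.
Proof.
rewrite (bigD1 j) //= big1 ?eqxx ?addr0 ?mulr1z //.
by move=> i /negbTE ->; rewrite mulr0z.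
Qed.

Lemma mul_eq_solutions (x y : nat) (P U : int) : (0 < x)%N ->
  x%:Z * P = y%:Z * U ->
  exists l : int, P = l * (y %/ gcdn x y)%N%:Z /\ U = l * (x %/ gcdn x y)%N%:Z.
Proof.
move=> x_gt0 xPyU; set d := gcdn x y; set x' := (x %/ d)%N; set y' := (y %/ d)%N.
have d_gt0 : (0 < d)%N by rewrite gcdn_gt0 x_gt0.
have xE : x = (x' * d)%N by rewrite divnK ?dvdn_gcdl.
have yE : y = (y' * d)%N by rewrite divnK ?dvdn_gcdr.
have x'_neq0 : x'%:Z != 0 by rewrite eqz_nat; apply/eqP; move: xE x_gt0; lia.
have x'Py'U : x'%:Z * P = y'%:Z * U.
  apply: (@mulfI _ d%:Z); first by rewrite eqz_nat -lt0n.
  by rewrite !mulrA -!PoszM ![(d * _)%N]mulnC -xE -yE.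
have cop : coprimez x' y'.
  have g1 : gcdn x' y' = 1%N.
    by apply/eqP; rewrite -(eqn_pmul2r d_gt0) mul1n muln_gcdl -xE -yE.
  by rewrite /coprimez /gcdz /= g1.
have : (x'%:Z %| y'%:Z * U)%Z by rewrite -x'Py'U dvdz_mulr.
rewrite Gauss_dvdzr // => /dvdzP [l UE]; exists l; split=> //.
by apply: (mulfI x'_neq0); rewrite x'Py'U UE; ring.
Qed.

Ltac chain_ring := apply/ffunP => ?; rewrite ?(ffunE, ffunMzE, mulrzz); ring.

Section GaneaSpan.
Variable gT : finGroupType.
Implicit Types (c d : chain2 gT) (g h k z : gT).

Definition ganea_comb (w : {ffun (gT * gT)%type -> int}) : chain2 gT :=
  \sum_(p : gT * gT | p.2 \in 'Z([set: gT])%g) ganea_cycle p.1 p.2 *~ w p.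

Lemma bd3D (x y : chain3 gT) : bd3 (x + y) = bd3 x + bd3 y.
Proof. exact: sum_MzD. Qed.

Lemma bd3N (x : chain3 gT) : bd3 (- x) = - bd3 x.
Proof. exact: sum_MzN. Qed.

Lemma ganea_combD w w' : ganea_comb (w + w') = ganea_comb w + ganea_comb w'.
Proof. exact: sum_MzD. Qed.

Lemma ganea_combN w : ganea_comb (- w) = - ganea_comb w.
Proof. exact: sum_MzN. Qed.

Definition in_ganea_span c : Prop := exists w, is_2boundary (c - ganea_comb w).

Lemma ganea_span_eq c d : in_ganea_span c -> c = d -> in_ganea_span d.
Proof. by move=> ? <-. Qed.

Lemma ganea_span0 : in_ganea_span 0.
Proof.
by exists 0, 0; rewrite /ganea_comb /bd3 !big1 ?subrr // => p _; rewrite ffunE mulr0z.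
Qed.

Lemma ganea_spanD c d : in_ganea_span c -> in_ganea_span d -> in_ganea_span (c + d).
Proof.
move=> [w [x hx]] [w' [x' hx']]; exists (w + w'), (x + x').
by rewrite bd3D ganea_combD -hx -hx' opprD addrACA.
Qed.

Lemma ganea_spanN c : in_ganea_span c -> in_ganea_span (- c).
Proof.
move=> [w [x hx]]; exists (- w), (- x).
by rewrite bd3N ganea_combN -hx opprD.
Qed.

Lemma ganea_spanB c d : in_ganea_span c -> in_ganea_span d -> in_ganea_span (c - d).
Proof. by move=> hc hd; apply: ganea_spanD hc (ganea_spanN hd). Qed.

Lemma ganea_spanMz c (z : int) : in_ganea_span c -> in_ganea_span (c *~ z).
Proof.
have spanMn n : in_ganea_span c -> in_ganea_span (c *+ n).
  move=> hc; elim: n => [|n IHn]; first by rewrite mulr0n; exact: ganea_span0.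
  by rewrite mulrS; exact: ganea_spanD.
by case: z => n hc; rewrite ?NegzE ?mulrNz -pmulrn; [|apply: ganea_spanN]; apply: spanMn.
Qed.

Lemma ganea_span_sum (I : finType) (P : pred I) (F : I -> chain2 gT) :
  (forall i, P i -> in_ganea_span (F i)) -> in_ganea_span (\sum_(i | P i) F i).
Proof. by move=> hF; apply: (big_ind in_ganea_span ganea_span0 ganea_spanD). Qed.

Lemma ganea_span_bd3 (x : chain3 gT) : in_ganea_span (bd3 x).
Proof.
by exists 0, x; rewrite /ganea_comb big1 ?subr0 // => p _; rewrite ffunE mulr0z.
Qed.

Lemma ganea_span_cycle g z : z \in 'Z([set: gT])%g -> in_ganea_span (ganea_cycle g z).
Proof.
move=> Zz; exists [ffun p => (p == (g, z))%:R], 0.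
rewrite /bd3 /ganea_comb (bigD1 (g, z)) //= ffunE eqxx mulr1z big1 ?addr0 ?subrr.
  by rewrite big1 // => p _; rewrite ffunE mulr0z.
by move=> p /andP[_ /negbTE pNgz]; rewrite ffunE pNgz mulr0z.
Qed.

Definition e3 g h k : chain3 gT := [ffun p => (p == (g, h, k))%:R].

Lemma ganea_span_assoc g h k :
  in_ganea_span (e2 h k - e2 (g * h)%g k + e2 g (h * k)%g - e2 g h).
Proof.
apply: ganea_span_eq (ganea_span_bd3 (e3 g h k)) _.
rewrite /bd3 (bigD1 (g, h, k)) //= big1 ?ffunE ?eqxx ?addr0 //.
by move=> p /negbTE pNghk; rewrite ffunE pNghk mulr0z.
Qed.

Lemma coboundary_on_cycle (V : zmodType) (T : gT -> V) c : is_2cycle c ->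
  \sum_p (T p.2 - T (p.1 * p.2)%g + T p.1) *~ c p = 0.
Proof.
move=> c_cycle.
transitivity (\sum_x T x *~ bd2 c x).
  2: by rewrite c_cycle; apply: big1 => x _; rewrite ffunE mulr0z.
under [RHS]eq_bigr do rewrite sum_ffunE mulrz_sumr.
rewrite exchange_big; apply: eq_bigr => p _ /=.
under eq_bigr do rewrite ffunMzE !ffunE mulrzz mulrzA mulrzDr mulrzBr.
by rewrite -mulrz_suml big_split sumrB /= !sum_Mz_eq.
Qed.

Lemma chain2_expand c : c = \sum_p e2 p.1 p.2 *~ c p.
Proof.
apply/ffunP => q; rewrite sum_ffunE (bigD1 q) //= big1 ?ffunMzE ?ffunE.
  by rewrite -surjective_pairing eqxx mulrzz mul1r addr0.
move=> p pNq; rewrite ffunMzE ffunE -surjective_pairing eq_sym (negbTE pNq).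
by rewrite mulrzz mul0r.
Qed.

End GaneaSpan.

Section CentralExtension.
Variable gT : finGroupType.
Local Notation C2 := (chain2 gT).

Definition ext := (C2 * gT)%type.
Implicit Types (x y z : ext) (u v : C2).

Definition ext_mul x y : ext := (x.1 + y.1 + e2 x.2 y.2, (x.2 * y.2)%g).
(* The boundary of [1|1|g] identifies [1|g] with [1|1], whence the correction
   in the unit. *)
Definition ext_one : ext := (- e2 1%g 1%g, 1%g).
Definition ext_shift x u : ext := (x.1 + u, x.2).
Definition ext_eqv x y : Prop := x.2 = y.2 /\ in_ganea_span (x.1 - y.1).

Lemma ext_eqv_refl x : ext_eqv x x.
Proof. by split; rewrite ?subrr; last exact: ganea_span0. Qed.

Lemma ext_eqv_sym x y : ext_eqv x y -> ext_eqv y x.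
Proof. by move=> [xy2 xy]; split; rewrite // -opprB; apply: ganea_spanN. Qed.

Lemma ext_eqv_trans x y z : ext_eqv x y -> ext_eqv y z -> ext_eqv x z.
Proof.
move=> [xy2 xy] [yz2 yz]; split; first by rewrite xy2.
by apply: ganea_span_eq (ganea_spanD xy yz) _; rewrite addrA subrK.
Qed.

#[local] Instance ext_eqv_Equivalence : Equivalence ext_eqv.
Proof. by split; [exact: ext_eqv_refl | exact: ext_eqv_sym | exact: ext_eqv_trans]. Qed.

#[local] Instance ext_mul_Proper : Proper (ext_eqv ==> ext_eqv ==> ext_eqv) ext_mul.
Proof.
move=> x x' [xx' hx] y y' [yy' hy]; rewrite /ext_mul xx' yy'; split=> //=.
by apply: ganea_span_eq (ganea_spanD hx hy) _; chain_ring.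
Qed.

#[local] Instance ext_shift_Proper : Proper (ext_eqv ==> eq ==> ext_eqv) ext_shift.
Proof.
by move=> x x' [xx' hx] u _ <-; split=> //=; apply: ganea_span_eq hx _; chain_ring.
Qed.

Lemma ext_mulA x y z : ext_eqv (ext_mul (ext_mul x y) z) (ext_mul x (ext_mul y z)).
Proof.
split; first by rewrite /= mulgA.
by apply: ganea_span_eq (ganea_spanN (ganea_span_assoc x.2 y.2 z.2)) _; chain_ring.
Qed.

Lemma ext_mul1 x : ext_eqv (ext_mul ext_one x) x.
Proof.
split; first by rewrite /= mul1g.
by apply: ganea_span_eq (ganea_span_assoc 1%g 1%g x.2) _; rewrite /= !mul1g; chain_ring.
Qed.

Lemma ext_mulx1 x : ext_eqv (ext_mul x ext_one) x.
Proof.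
split; first by rewrite /= mulg1.
apply: ganea_span_eq (ganea_spanN (ganea_span_assoc x.2 1%g 1%g)) _.
by rewrite /= !mulg1; chain_ring.
Qed.

Lemma ext_mul_shiftl x y u : ext_mul (ext_shift x u) y = ext_shift (ext_mul x y) u.
Proof. by congr (_, _); chain_ring. Qed.

Lemma ext_mul_shiftr x y u : ext_mul x (ext_shift y u) = ext_shift (ext_mul x y) u.
Proof. by congr (_, _); chain_ring. Qed.

Lemma ext_shiftD x u v : ext_shift (ext_shift x u) v = ext_shift x (u + v).
Proof. by rewrite /ext_shift addrA. Qed.

Lemma ext_shift0 x : ext_shift x 0 = x.
Proof. by rewrite /ext_shift addr0; case: x. Qed.

Lemma ext_shift_sub x y : x.2 = y.2 -> y = ext_shift x (y.1 - x.1).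
Proof. by case: x y => [u g] [v h] /= ->; rewrite /ext_shift addrC subrK. Qed.

Lemma ext_eqv_shift_span x y u :
  ext_eqv x (ext_shift y u) -> in_ganea_span (x.1 - y.1 - u).
Proof. by move=> [_ xyu]; apply: ganea_span_eq xyu _; chain_ring. Qed.

Fixpoint ext_pow x n : ext :=
  if n is n'.+1 then ext_mul x (ext_pow x n') else ext_one.

Lemma ext_pow2 x n : (ext_pow x n).2 = (x.2 ^+ n)%g.
Proof. by elim: n => [|n IHn] //=; rewrite IHn expgS. Qed.

Lemma ext_powD x i j :
  ext_eqv (ext_pow x (i + j)) (ext_mul (ext_pow x i) (ext_pow x j)).
Proof.
elim: i => [|i IHi] /=; first by symmetry; apply: ext_mul1.
by setoid_rewrite IHi; symmetry; apply: ext_mulA.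
Qed.

Section Presentation.
Variables (a b : gT) (m n t s : nat).
Hypotheses (m_gt0 : (0 < m)%N) (n_gt0 : (0 < n)%N) (s_gt0 : (0 < s)%N).
Hypotheses (a_m : (a ^+ m = 1)%g) (b_n : (b ^+ n = a ^+ t)%g)
           (b_a : (b * a = a ^+ s * b)%g).
Hypothesis nf_exists : forall g, exists ij : nat * nat,
  [&& (ij.1 < m)%N, (ij.2 < n)%N & g == (a ^+ ij.1 * b ^+ ij.2)%g].
Hypothesis nf_uniq : forall i j i' j', (i < m)%N -> (j < n)%N ->
  (i' < m)%N -> (j' < n)%N -> (a ^+ i * b ^+ j = a ^+ i' * b ^+ j')%g ->
  i = i' /\ j = j'.

Definition exp_a g := (xchoose (nf_exists g)).1.
Definition exp_b g := (xchoose (nf_exists g)).2.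

Lemma exp_abK g : g = (a ^+ exp_a g * b ^+ exp_b g)%g.
Proof. by case/and3P: (xchooseP (nf_exists g)) => _ _ /eqP. Qed.

Lemma exp_ab_nf i j : (i < m)%N -> (j < n)%N ->
  exp_a (a ^+ i * b ^+ j)%g = i /\ exp_b (a ^+ i * b ^+ j)%g = j.
Proof.
move=> lt_i_m lt_j_n; case/and3P: (xchooseP (nf_exists (a ^+ i * b ^+ j)%g)).
by move=> lt_m lt_n /eqP /esym; apply: nf_uniq.
Qed.

Definition ext_a : ext := (0, a).
Definition ext_b : ext := (0, b).

Definition alpha : C2 := (ext_pow ext_a m).1 - ext_one.1.
Definition beta : C2 := (ext_pow ext_b n).1 - (ext_pow ext_a t).1.
Definition gamma : C2 :=
  (ext_mul ext_b ext_a).1 - (ext_mul (ext_pow ext_a s) ext_b).1.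

Lemma ext_a_order : ext_pow ext_a m = ext_shift ext_one alpha.
Proof. by apply: ext_shift_sub; rewrite ext_pow2 a_m. Qed.

Lemma ext_b_order : ext_pow ext_b n = ext_shift (ext_pow ext_a t) beta.
Proof. by apply: ext_shift_sub; rewrite !ext_pow2 b_n. Qed.

Lemma ext_b_a :
  ext_mul ext_b ext_a = ext_shift (ext_mul (ext_pow ext_a s) ext_b) gamma.
Proof. by apply: ext_shift_sub; rewrite /= ext_pow2 b_a. Qed.

Lemma ext_pow_a_addm i e :
  ext_eqv (ext_pow ext_a (i + m * e)) (ext_shift (ext_pow ext_a i) (alpha *+ e)).
Proof.
elim: e => [|e IHe]; first by rewrite muln0 addn0 mulr0n ext_shift0; reflexivity.
rewrite mulnS addnCA addnC; setoid_rewrite (ext_powD ext_a (i + m * e) m).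
rewrite ext_a_order ext_mul_shiftr.
setoid_rewrite (ext_mulx1 (ext_pow ext_a (i + m * e))); setoid_rewrite IHe.
by rewrite ext_shiftD mulrSr; reflexivity.
Qed.

Lemma ext_b_pow_a k : ext_eqv (ext_mul ext_b (ext_pow ext_a k))
  (ext_shift (ext_mul (ext_pow ext_a (s * k)) ext_b) (gamma *+ k)).
Proof.
elim: k => [|k IHk].
  rewrite muln0 mulr0n ext_shift0 /=; setoid_rewrite (ext_mulx1 ext_b).
  by symmetry; apply: ext_mul1.
rewrite /= -(ext_mulA ext_b ext_a) ext_b_a ext_mul_shiftl.
rewrite (ext_mulA (ext_pow ext_a s) ext_b (ext_pow ext_a k)) IHk ext_mul_shiftr.
by rewrite -(ext_mulA (ext_pow ext_a s)) -ext_powD -mulnS ext_shiftD mulrSr; reflexivity.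
Qed.

Definition geom j := (\sum_(i < j) s ^ i)%N.

Lemma ext_pow_b_pow_a j k : ext_eqv (ext_mul (ext_pow ext_b j) (ext_pow ext_a k))
  (ext_shift (ext_mul (ext_pow ext_a (k * s ^ j)) (ext_pow ext_b j))
             (gamma *+ (k * geom j))).
Proof.
elim: j => [|j IHj].
  rewrite expn0 muln1 /geom big_ord0 muln0 mulr0n ext_shift0 /=.
  by setoid_rewrite (ext_mul1 (ext_pow ext_a k)); symmetry; apply: ext_mulx1.
rewrite /= (ext_mulA ext_b (ext_pow ext_b j)) IHj ext_mul_shiftr.
rewrite -(ext_mulA ext_b) ext_b_pow_a ext_mul_shiftl ext_shiftD.
rewrite (ext_mulA (ext_pow ext_a _) ext_b) /geom big_ord_recr /=.
by rewrite expnS mulnCA mulnDr addnC mulrnDr; reflexivity.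
Qed.

Lemma ext_pow_b_div q r : ext_eqv (ext_pow ext_b (n * q + r))
  (ext_shift (ext_mul (ext_pow ext_a (t * q)) (ext_pow ext_b r)) (beta *+ q)).
Proof.
elim: q => [|q IHq].
  by rewrite !muln0 add0n mulr0n ext_shift0 /=; symmetry; apply: ext_mul1.
rewrite mulnS -addnA ext_powD ext_b_order ext_mul_shiftl IHq ext_mul_shiftr ext_shiftD.
by rewrite -(ext_mulA (ext_pow ext_a t)) -ext_powD -mulnS mulrSr; reflexivity.
Qed.

Definition ext_nf g : ext :=
  ext_mul (ext_pow ext_a (exp_a g)) (ext_pow ext_b (exp_b g)).

Lemma ext_nf2 g : (ext_nf g).2 = g.
Proof. by rewrite /= !ext_pow2 -exp_abK. Qed.

(* (a^i b^j)(a^k b^l) = a^(i + k s^j + t q) b^r where j + l = q n + r, and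
   [exp_a_mul] is this unreduced a-exponent; collecting the corresponding
   product in [ext] uses a^m = 1 [carry_a] times, b^n = a^t [carry_b] times and
   b a = a^s b [gamma_mult] times. *)
Definition carry_b g h := ((exp_b g + exp_b h) %/ n)%N.
Definition exp_a_mul g h := (exp_a g + exp_a h * s ^ exp_b g + t * carry_b g h)%N.
Definition carry_a g h := (exp_a_mul g h %/ m)%N.
Definition gamma_mult g h := (exp_a h * geom (exp_b g))%N.
Definition nf_defect g h : C2 :=
  alpha *+ carry_a g h + beta *+ carry_b g h + gamma *+ gamma_mult g h.

Lemma ext_nf_mul_collect g h : ext_eqv (ext_mul (ext_nf g) (ext_nf h))
  (ext_shift (ext_mul (ext_pow ext_a (exp_a_mul g h %% m))
                      (ext_pow ext_b ((exp_b g + exp_b h) %% n))) (nf_defect g h)).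
Proof.
have div_b : (exp_b g + exp_b h = n * carry_b g h + (exp_b g + exp_b h) %% n)%N.
  by rewrite /carry_b mulnC -divn_eq.
have div_a : (exp_a_mul g h = exp_a_mul g h %% m + m * carry_a g h)%N.
  by rewrite /carry_a mulnC addnC -divn_eq.
rewrite /ext_nf (ext_mulA (ext_pow ext_a _)) -(ext_mulA (ext_pow ext_b _)).
rewrite ext_pow_b_pow_a ext_mul_shiftl ext_mul_shiftr.
rewrite (ext_mulA (ext_pow ext_a (exp_a h * _))) -ext_powD.
rewrite -(ext_mulA (ext_pow ext_a (exp_a g))) -ext_powD.
rewrite [in ext_pow ext_b (exp_b g + exp_b h)]div_b.
rewrite ext_pow_b_div ext_mul_shiftr ext_shiftD -(ext_mulA (ext_pow ext_a _)) -ext_powD.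
rewrite -/(exp_a_mul g h) [in ext_pow ext_a (exp_a_mul g h)]div_a.
by rewrite ext_pow_a_addm ext_mul_shiftl ext_shiftD /nf_defect addrA; reflexivity.
Qed.

Lemma exp_ab_mul g h : exp_a (g * h)%g = (exp_a_mul g h %% m)%N /\
  exp_b (g * h)%g = ((exp_b g + exp_b h) %% n)%N.
Proof.
have [gh2 _] := ext_nf_mul_collect g h.
move: gh2; rewrite /= !ext_pow2 -!exp_abK => ->.
exact: exp_ab_nf (ltn_pmod _ m_gt0) (ltn_pmod _ n_gt0).
Qed.

Lemma ext_nf_mul g h :
  ext_eqv (ext_mul (ext_nf g) (ext_nf h)) (ext_shift (ext_nf (g * h)%g) (nf_defect g h)).
Proof.
by rewrite /ext_nf; case: (exp_ab_mul g h) => -> ->; exact: ext_nf_mul_collect.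
Qed.

Lemma exp_b_coboundary g h :
  (exp_b h)%:Z - (exp_b (g * h)%g)%:Z + (exp_b g)%:Z = n%:Z * (carry_b g h)%:Z.
Proof.
have := congr1 Posz (divn_eq (exp_b g + exp_b h) n).
by rewrite !PoszD PoszM /carry_b; case: (exp_ab_mul g h) => _ ->; lia.
Qed.

Lemma expn_geom j : (s ^ j)%:Z = 1 + (s%:Z - 1) * (geom j)%:Z.
Proof.
elim: j => [|j IHj]; first by rewrite /geom big_ord0 mulr0 addr0.
by rewrite /geom in IHj *; rewrite big_ord_recr /= expnS PoszD !PoszM IHj; ring.
Qed.

Lemma exp_a_coboundary g h :
  (exp_a h)%:Z - (exp_a (g * h)%g)%:Z + (exp_a g)%:Z =
  m%:Z * (carry_a g h)%:Z - t%:Z * (carry_b g h)%:Z - (s%:Z - 1) * (gamma_mult g h)%:Z.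
Proof.
have mod_a : (exp_a_mul g h %% m)%:Z = (exp_a_mul g h)%:Z - m%:Z * (carry_a g h)%:Z.
  by rewrite {2}(divn_eq (exp_a_mul g h) m) PoszD PoszM /carry_a; ring.
have := expn_geom (exp_b g); case: (exp_ab_mul g h) => -> _.
rewrite mod_a /gamma_mult /exp_a_mul !PoszD !PoszM => ->; ring.
Qed.

Lemma central_of_commute_ab (x : gT) :
  commute x a -> commute x b -> x \in 'Z([set: gT])%g.
Proof.
move=> xa xb; apply/centerP; split=> [|y _]; first by rewrite inE.
by rewrite (exp_abK y); apply: commuteM; apply: commuteX.
Qed.

Lemma ganea_span_alpha_gamma :
  in_ganea_span (alpha *+ (s.-1 %/ gcdn m s.-1) + gamma *+ (m %/ gcdn m s.-1)).
Proof.
set k0 := (m %/ _)%N; set e0 := (s.-1 %/ _)%N.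
have s_k0 : (s * k0 = k0 + m * e0)%N.
  rewrite /k0 /e0 -(prednK s_gt0) mulSn; congr (_ + _)%N.
  by rewrite !muln_divA ?dvdn_gcdl ?dvdn_gcdr // mulnC.
have comm := ext_b_pow_a k0.
rewrite s_k0 ext_pow_a_addm ext_mul_shiftl ext_shiftD in comm.
have [ba_k0 _] := comm; rewrite /= !ext_pow2 in ba_k0.
have Zak0 : (a ^+ k0)%g \in 'Z([set: gT])%g.
  apply: central_of_commute_ab; last by rewrite /commute ba_k0.
  by apply/commute_sym/commuteX.
have := ganea_spanB (ganea_span_cycle b Zak0) (ext_eqv_shift_span comm).
move/ganea_span_eq; apply.
by rewrite /ganea_cycle /= !ext_pow2; chain_ring.
Qed.

Lemma ganea_span_alpha_gamma_comb (P U : int) : m%:Z * P = (s%:Z - 1) * U ->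
  in_ganea_span (alpha *~ P + gamma *~ U).
Proof.
have -> : s%:Z - 1 = s.-1%:Z by rewrite -subn1 subzn.
move=> /(mul_eq_solutions m_gt0) [l [-> ->]]; rewrite -!mulrzA_C -mulrzDl -!pmulrn.
exact: ganea_spanMz ganea_span_alpha_gamma.
Qed.

Lemma cycle_nf_defect c : is_2cycle c ->
  in_ganea_span (c - \sum_p nf_defect p.1 p.2 *~ c p).
Proof.
move=> c_cycle; pose T g := (ext_nf g).1.
have cE : c = \sum_p (e2 p.1 p.2 + (T p.2 - T (p.1 * p.2)%g + T p.1)) *~ c p.
  under eq_bigr do rewrite mulrzDl.
  by rewrite big_split /= coboundary_on_cycle // addr0 -chain2_expand.
rewrite {1}cE -sumrB; apply: ganea_span_sum => p _; rewrite -mulrzBl.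
apply/ganea_spanMz/(ganea_span_eq (ext_eqv_shift_span (ext_nf_mul p.1 p.2))).
rewrite -[(ext_mul _ _).1]/(T p.1 + T p.2 + e2 (ext_nf p.1).2 (ext_nf p.2).2).
by rewrite !ext_nf2; chain_ring.
Qed.

Section DefectWeights.
Variable c : C2.
Hypothesis c_cycle : is_2cycle c.

Let weight (f : gT -> gT -> nat) := \sum_(p : gT * gT) (f p.1 p.2)%:Z * c p.

Lemma sum_nf_defect : \sum_p nf_defect p.1 p.2 *~ c p =
  alpha *~ weight carry_a + beta *~ weight carry_b + gamma *~ weight gamma_mult.
Proof.
rewrite /weight !mulrz_sumr -!big_split; apply: eq_bigr => p _ /=.
by rewrite /nf_defect !mulrzA -!pmulrn -!mulrzDl.
Qed.

Lemma weight_carry_b : weight carry_b = 0.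
Proof.
have : n%:Z * weight carry_b = 0.
  rewrite -(coboundary_on_cycle (fun g => (exp_b g)%:Z) c_cycle) /weight mulr_sumr.
  by apply: eq_bigr => p _; rewrite exp_b_coboundary mulrzz mulrA.
by move/eqP; rewrite mulf_eq0 eqz_nat gtn_eqF //= => /eqP.
Qed.

Lemma weight_alpha_gamma : m%:Z * weight carry_a = (s%:Z - 1) * weight gamma_mult.
Proof.
have := coboundary_on_cycle (fun g => (exp_a g)%:Z) c_cycle.
have -> : \sum_p ((exp_a p.2)%:Z - (exp_a (p.1 * p.2)%g)%:Z + (exp_a p.1)%:Z) *~ c p =
    m%:Z * weight carry_a - t%:Z * weight carry_b - (s%:Z - 1) * weight gamma_mult.
  rewrite /weight !mulr_sumr -!sumrB; apply: eq_bigr => p _.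
  by rewrite exp_a_coboundary mulrzz; ring.
by rewrite weight_carry_b mulr0 subr0 => /eqP; rewrite subr_eq0 => /eqP.
Qed.

Lemma ganea_span_2cycle : in_ganea_span c.
Proof.
have := ganea_spanD (cycle_nf_defect c_cycle)
  (ganea_span_alpha_gamma_comb weight_alpha_gamma).
by rewrite sum_nf_defect weight_carry_b mulr0z addr0 subrK.
Qed.

End DefectWeights.
End Presentation.
End CentralExtension.

Section CyclicByCyclic.
Variables (gT : finGroupType) (H : {group gT}) (a : gT) (cb : coset_of H).
Hypotheses (H_a : H :=: <[a]>%g) (nsH : (H <| [set: gT])%g)
           (quo_cb : ([set: gT] / H)%g = <[cb]>%g).

Let b := repr cb.
Let m := #[a]%g.
Let n := #[cb]%g.

Lemma mem_normH (x : gT) : x \in 'N(H)%g.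
Proof. by apply: (subsetP (normal_norm nsH)); rewrite inE. Qed.

Lemma coset_b_pow k : coset H (b ^+ k)%g = (cb ^+ k)%g.
Proof. by rewrite morphX ?mem_normH //; congr (_ ^+ _)%g; exact: coset_reprK. Qed.

Lemma b_order_mod_a : exists t, (b ^+ n = a ^+ t)%g.
Proof.
apply/cycleP; rewrite -H_a; apply: coset_idr; first exact: mem_normH.
by rewrite coset_b_pow expg_order.
Qed.

Lemma conj_b_a : exists2 s, (0 < s)%N & (b * a = a ^+ s * b)%g.
Proof.
have /cycleP[s0 s0E] : (a ^ b^-1)%g \in <[a]>%g.
  by rewrite -H_a memJ_norm ?mem_normH // H_a cycle_id.
exists (s0 + m)%N; first by rewrite addn_gt0 order_gt0 orbT.
by rewrite expgD expg_order mulg1 -s0E /conjg invgK -!mulgA mulVg mulg1.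
Qed.

Lemma exists_ab_nf g : exists ij : nat * nat,
  [&& (ij.1 < m)%N, (ij.2 < n)%N & g == (a ^+ ij.1 * b ^+ ij.2)%g].
Proof.
have /cyclePmin[j lt_j_n gE] : coset H g \in <[cb]>%g.
  by rewrite -quo_cb mem_quotient ?inE.
have /cyclePmin[i lt_i_m gbE] : (g * (b ^+ j)^-1)%g \in <[a]>%g.
  rewrite -H_a; apply: coset_idr; first exact: mem_normH.
  apply: (mulIg (cb ^+ j)%g); rewrite mul1g -coset_b_pow -coset_morphM ?mem_normH //.
  by rewrite mulgKV gE coset_b_pow.
by exists (i, j); rewrite /= lt_i_m lt_j_n -gbE mulgKV eqxx.
Qed.

Lemma ab_nf_uniq i j i' j' : (i < m)%N -> (j < n)%N -> (i' < m)%N -> (j' < n)%N ->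
  (a ^+ i * b ^+ j = a ^+ i' * b ^+ j')%g -> i = i' /\ j = j'.
Proof.
move=> lt_i lt_j lt_i' lt_j' eq_ab.
have aH k : (a ^+ k)%g \in H by rewrite H_a mem_cycle.
have j_eq : j = j'.
  move: (congr1 (coset H) eq_ab); rewrite !coset_kerl ?aH //.
  rewrite !coset_b_pow => /eqP.
  by rewrite eq_expg_mod_order !modn_small // => /eqP.
split=> //; move: eq_ab; rewrite -j_eq => /mulIg /eqP.
by rewrite eq_expg_mod_order !modn_small // => /eqP.
Qed.

Lemma ganea_epi_cyclic_by_cyclic : ganea_epi gT.
Proof.
have [t b_n] := b_order_mod_a; have [s s_gt0 b_a] := conj_b_a.
move=> c c_cycle.
exact: (ganea_span_2cycle (order_gt0 a) (order_gt0 cb) s_gt0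
  (expg_order a) b_n b_a exists_ab_nf ab_nf_uniq c_cycle).
Qed.

End CyclicByCyclic.

Theorem proposition3p1 (gT : finGroupType) :
  metacyclic [set: gT]%g -> ganea_epi gT.
Proof.
case/metacyclicP => H [/cyclicP[a H_a] nsH /cyclicP[cb quo_cb]].
exact: ganea_epi_cyclic_by_cyclic H_a nsH quo_cb.
Qed.
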